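(* Let $L\subset\mathbb{R}^{n+1}$ be an $(n+1)$-dimensional lattice with $|q|^2\in\mathbb{N}_0$ for all $q\in L$. The theta series $\Theta_L(x,w)$ satisfies the differential equation $$\big[\Delta_w-4\pi\omega\,\partial_s\big]\Theta_L(x,w)=0,$$ where $\Delta_w=\sum_{i=0}^n\frac{\partial^2}{\partial w_i^2}$ and $\partial_s$ is the slice derivative with respect to $x$.
   Context: $\mathbb{R}_n$ is the real Clifford algebra generated by $e_1,\dots,e_n$, $e_0=1$; paravectors $x=x_0+\underline{x}$ identified with $\mathbb{R}^{n+1}$; for $x\in H=\mathbb{R}^{n+1}\setminus\mathbb{R}$, $\omega=\underline{x}/\|\underline{x}\|\in\mathbb{S}^{n-1}$ ($\omega^2=-1$), $\mathbb{C}_\omega=\{u+\omega v\}$, and $w=\sum_{i=0}^ne_iw_i$ with $w_i\in\mathbb{C}_\omega$; $\langle q,w\rangle=\sum_iq_iw_i$. Lattice $L=\{\sum m_i\mathfrak{Q}_i: m_i\in\mathbb{Z}\}$. Slice monogenic functions $f(u+\omega v)=\alpha+\omega\beta$ with $(\alpha,\beta)$ satisfying the Cauchy–Riemann system; $*$-product $(\alpha+\omega\beta)*(\gamma+\omega\delta)=(\alpha\gamma-\beta\delta)+\omega(\beta\gamma+\alpha\delta)$; $\exp_*(f)=\sum_kf^{*k}/k!$. The slice derivative of $f=\alpha+\omega\beta$ is $\partial_sf(u+\omega v)=\partial_u\alpha(u,v)+\omega\partial_u\beta(u,v)$. $\Theta_L(x,w)=\sum_{q\in L}\exp_*\big((\pi|q|^2x+2\pi\langle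 q,w\rangle)\omega\big)$; the derivatives $\partial/\partial w_i$ are the complex derivatives in $w_i\in\mathbb{C}_\omega$. *)

From Stdlib Require Import Reals ZArith.
From Coquelicot Require Import Coquelicot.
Open Scope R_scope.

(* Vectors of R^{n+1} are functions nat -> R, only indices 0..n are used.
   Coquelicot's [sum_n a n] is a 0 + ... + a n  (n+1 terms). *)

(* q = sum_j m_j Q_j, where Qb j is the j-th lattice generator (j = 0..n)
   and Qb j i its i-th coordinate. *)
Definition lattice_pt (n : nat) (Qb : nat -> nat -> R) (m : nat -> Z) : nat -> R :=
  fun i => sum_n (fun j => IZR (m j) * Qb j i) n.

Definition sqnorm (n : nat) (q : nat -> R) : R := sum_n (fun i => q i * q i) n.

(* the generators Q_0..Q_n are linearly independent: L is an
   (n+1)-dimensional lattice in R^{n+1} *)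
Definition lin_indep (n : nat) (Qb : nat -> nat -> R) : Prop :=
  forall c : nat -> R,
    (forall i, (i <= n)%nat -> sum_n (fun j => c j * Qb j i) n = 0) ->
    forall j, (j <= n)%nat -> c j = 0.

Definition Clim_seq (a : nat -> C) : C :=
  (real (Lim_seq (fun N => Re (a N))), real (Lim_seq (fun N => Im (a N)))).

(* Values in C_omega = { a + omega b } are represented by pairs (a,b) : C,
   i.e. via the isomorphism C_omega ~ C, omega |-> Ci.  Under this
   representation the *-product of slice functions is Cmult. *)

Definition exp_star (c : C) : C :=
  Clim_seq (fun N => sum_n (fun k => Cdiv (Cpow c k) (RtoC (INR (fact k)))) N).

(* sum of F m over the box m_0, ..., m_k in [-N, N] *)
Definition zsum (N : nat) (g : Z -> C) : C :=
  sum_n (fun t => g (Z.of_nat t - Z.of_nat N)%Z) (2 * N).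

Fixpoint boxsum (k N : nat) (F : (nat -> Z) -> C) : C :=
  match k with
  | O => zsum N (fun z => F (fun _ => z))
  | S k' => zsum N (fun z => boxsum k' N (fun m => F (fun j => if Nat.eqb j (S k') then z else m j)))
  end.

Definition qdot (n : nat) (q : nat -> R) (w : nat -> C) : C :=
  sum_n (fun i => Cmult (RtoC (q i)) (w i)) n.

(* Theta_L(x, w) on the slice C_omega, with x = u + omega v represented by
   z = (u, v):  sum_{q in L} exp_*((pi |q|^2 x + 2 pi <q,w>) omega),
   the lattice sum taken as the limit of the sums over the boxes
   m in [-N, N]^{n+1}. *)
Definition ThetaL (n : nat) (Qb : nat -> nat -> R) (z : C) (w : nat -> C) : C :=
  Clim_seq
         (fun N => boxsum n N (fun m =>
            let q := lattice_pt n Qb m in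
            exp_star (Cmult (Cplus (Cmult (RtoC (PI * sqnorm n q)) z)
                                   (Cmult (RtoC (2 * PI)) (qdot n q w))) Ci))).

Definition upd (w : nat -> C) (i : nat) (t : C) : nat -> C :=
  fun j => if Nat.eqb j i then t else w j.

(* Identify [C_omega] with [C] (omega |-> i) and write [x = u + omega v]; then
   [Theta_L(x, w) = Sum_q e^(theta_q)] with [theta_q = (pi |q|^2 x + 2 pi <q, w>) i], the
   *-exponential being the ordinary complex exponential.  Each exponent is affine in [x] and
   in each [w_i], with slopes [i pi |q|^2] and [2 pi i q_i].  For [v > 0] the terms, together
   with their shifts in a disc, are dominated by a Gaussian [C e^(-a |q|^2)], which is summable
   because linear independence of the generators gives [|q|^2 >= c |m|^2].  So the series can
   be differentiated term by term, with a uniform quadratic remainder bound, and the equation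
   reduces to an algebraic identity between the termwise derivatives. *)

From Stdlib Require Import Reals ZArith Lra Lia Psatz FunctionalExtensionality.
From Coquelicot Require Import Coquelicot.
From mathcomp Require all_boot all_algebra Rstruct.
Open Scope R_scope.

Lemma sum_n_Rabs_le (f g : nat -> R) (N : nat) :
  (forall k, (k <= N)%nat -> Rabs (f k) <= g k) -> Rabs (sum_n f N) <= sum_n g N.
Proof.
  intros H. induction N as [|N IH].
  - rewrite !sum_O. apply H. lia.
  - rewrite !sum_Sn. eapply Rle_trans; [apply Rabs_triang|]. apply Rplus_le_compat; auto.
Qed.

Lemma sum_n_Rmult_l (c : R) (f : nat -> R) (N : nat) :
  sum_n (fun k => c * f k) N = c * sum_n f N.
Proof. apply (sum_n_mult_l (K := R_Ring)). Qed.

Lemma sum_n_Rplus (f g : nat -> R) (N : nat) :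
  sum_n (fun k => f k + g k) N = sum_n f N + sum_n g N.
Proof. apply (sum_n_plus (G := R_AbelianMonoid)). Qed.

Lemma sum_n_Cplus (f g : nat -> C) (N : nat) :
  sum_n (fun k => f k + g k)%C N = (sum_n f N + sum_n g N)%C.
Proof. apply (sum_n_plus (G := C_AbelianMonoid)). Qed.

Lemma sum_n_Cmult_r (f : nat -> C) (c : C) (N : nat) :
  sum_n (fun k => f k * c)%C N = (sum_n f N * c)%C.
Proof. apply (sum_n_mult_r (K := C_Ring)). Qed.

Lemma sum_n_RtoC (f : nat -> R) (N : nat) : sum_n (fun k => RtoC (f k)) N = RtoC (sum_n f N).
Proof.
  induction N as [|N IH]; [now rewrite !sum_O|].
  rewrite !sum_Sn, IH. unfold plus; simpl. unfold Cplus, RtoC; simpl. f_equal. ring.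
Qed.

Lemma sum_n_Re (f : nat -> C) (N : nat) : Re (sum_n f N) = sum_n (fun k => Re (f k)) N.
Proof. induction N as [|N IH]; [now rewrite !sum_O | now rewrite !sum_Sn, <- IH]. Qed.

Lemma sum_n_Im (f : nat -> C) (N : nat) : Im (sum_n f N) = sum_n (fun k => Im (f k)) N.
Proof. induction N as [|N IH]; [now rewrite !sum_O | now rewrite !sum_Sn, <- IH]. Qed.

Lemma sum_n_Rle (f g : nat -> R) (N : nat) :
  (forall k, (k <= N)%nat -> f k <= g k) -> sum_n f N <= sum_n g N.
Proof.
  intros H. induction N as [|N IH]; [rewrite !sum_O; auto|].
  rewrite !sum_Sn. apply Rplus_le_compat; auto.
Qed.

Lemma sum_n_nonneg (f : nat -> R) (N : nat) : (forall k, 0 <= f k) -> 0 <= sum_n f N.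
Proof.
  intros H. rewrite <- (Rmult_0_r (INR (S N))), <- sum_n_const.
  apply sum_n_Rle. auto.
Qed.

Lemma Rle_term_sum_n (f : nat -> R) (N j : nat) :
  (forall k, 0 <= f k) -> (j <= N)%nat -> f j <= sum_n f N.
Proof.
  intros H Hj. induction N as [|N IH].
  - replace j with 0%nat by lia. rewrite sum_O. lra.
  - rewrite sum_Sn. unfold plus; simpl. destruct (Nat.eq_dec j (S N)) as [->|Hne].
    + pose proof (sum_n_nonneg f N H). lra.
    + specialize (IH ltac:(lia)). specialize (H (S N)). lra.
Qed.

Lemma sum_n_shift (f : nat -> R) (N : nat) : sum_n f (S N) = f 0%nat + sum_n (fun k => f (S k)) N.
Proof.
  induction N as [|N IH]; [rewrite sum_Sn, !sum_O; reflexivity|].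
  rewrite sum_Sn, IH, (sum_Sn _ N). unfold plus; simpl. ring.
Qed.

Lemma INR_fact_pos (k : nat) : 0 < INR (fact k).
Proof. apply lt_0_INR, lt_O_fact. Qed.

Lemma exp_le (x y : R) : x <= y -> exp x <= exp y.
Proof. intros [H|H]; [left; apply exp_increasing, H | subst; lra]. Qed.

Lemma exp_mult_INR (b : R) (k : nat) : exp (b * INR k) = exp b ^ k.
Proof.
  induction k as [|k IH]; [simpl; rewrite Rmult_0_r; apply exp_0|].
  rewrite S_INR, Rmult_plus_distr_l, Rmult_1_r, exp_plus, IH. simpl. ring.
Qed.

Lemma cube_le_exp (x : R) : 0 <= x -> x ^ 3 <= 27 * exp x.
Proof.
  intros Hx.
  replace (exp x) with (exp (x / 3) ^ 3) by (rewrite <- exp_mult_INR; f_equal; simpl; field).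
  replace (x ^ 3) with (27 * (x / 3) ^ 3) by field.
  apply Rmult_le_compat_l; [lra|]. apply pow_incr.
  pose proof (exp_ineq1_le (x / 3)). lra.
Qed.

Lemma Rabs_le_eps_sqr (x eps : R) : 0 < eps -> Rabs x <= eps * x ^ 2 + / (4 * eps).
Proof.
  intros He. rewrite <- pow2_abs.
  assert (H : 0 <= eps * (Rabs x - / (2 * eps)) ^ 2) by (apply Rmult_le_pos; [lra | apply pow2_ge_0]).
  replace (eps * (Rabs x - / (2 * eps)) ^ 2) with (eps * Rabs x ^ 2 - Rabs x + / (4 * eps)) in H
    by (field; lra).
  lra.
Qed.

Lemma Rmult_exp_le_compat (a b x y : R) : 0 <= a <= b -> x <= y -> a * exp x <= b * exp y.
Proof. intros Hab Hxy. apply Rmult_le_compat; [lra | left; apply exp_pos | lra | apply exp_le, Hxy]. Qed.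

Lemma is_lim_seq_Rabs_le (u : nat -> R) (l B : R) :
  is_lim_seq u l -> (forall N, Rabs (u N) <= B) -> Rabs l <= B.
Proof.
  intros Hu HB. apply Rabs_le.
  assert (Hl : forall N, - B <= u N <= B) by (intros N; apply Rabs_le_between, HB).
  split.
  - apply (is_lim_seq_le (fun _ => - B) u (- B) l); auto using is_lim_seq_const.
    intros N; apply Hl.
  - apply (is_lim_seq_le u (fun _ => B) l B); auto using is_lim_seq_const.
    intros N; apply Hl.
Qed.

(** * The exponential series *)

Definition cexp (z : C) : C := (exp (Re z) * cos (Im z), exp (Re z) * sin (Im z)).

Lemma cexp_plus (x y : C) : cexp (x + y) = (cexp x * cexp y)%C.
Proof.
  destruct x as [a b], y as [c d]. unfold cexp, Cplus, Cmult, Re, Im; simpl.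
  rewrite exp_plus, cos_plus, sin_plus. f_equal; ring.
Qed.

Lemma cexp_0 : cexp 0 = 1%C.
Proof. unfold cexp, Re, Im; simpl. rewrite exp_0, cos_0, sin_0, !Rmult_1_l. reflexivity. Qed.

Lemma Cmod_cexp (z : C) : Cmod (cexp z) = exp (Re z).
Proof.
  unfold cexp, Cmod; simpl.
  pose proof (sin2_cos2 (Im z)) as H. unfold Rsqr in H.
  match goal with |- sqrt ?e = _ => replace e with (exp (Re z) ^ 2) by nra end.
  apply sqrt_pow2. left; apply exp_pos.
Qed.

Lemma im_le_Cmod (z : C) : Rabs (Im z) <= Cmod z.
Proof.
  unfold Cmod. rewrite <- sqrt_Rsqr_abs. apply sqrt_le_1_alt.
  unfold Rsqr, Im. nra.
Qed.

Lemma Cmod_le_Rabs_re_im (z : C) : Cmod z <= Rabs (Re z) + Rabs (Im z).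
Proof.
  unfold Cmod, Re, Im. pose proof (Rabs_pos (fst z)); pose proof (Rabs_pos (snd z)).
  rewrite <- (sqrt_pow2 (Rabs (fst z) + Rabs (snd z))) by lra.
  apply sqrt_le_1_alt. rewrite <- (pow2_abs (fst z)), <- (pow2_abs (snd z)). nra.
Qed.

Lemma Re_mult_le (b h : C) : Re (b * h) <= Cmod b * Cmod h.
Proof. rewrite <- Cmod_mult. eapply Rle_trans; [apply Rle_abs | apply re_le_Cmod]. Qed.

Lemma CV_radius_factorial_bound (g : nat -> R) (r : R) :
  0 <= r -> (forall k, Rabs (g k) <= r ^ k / INR (fact k)) ->
  forall x, Rbar_lt (Rabs x) (CV_radius g).
Proof.
  intros Hr Hg x.
  set (y := Rabs x + 1).
  assert (Hy : 0 <= y) by (pose proof (Rabs_pos x); unfold y; lra).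
  apply Rbar_lt_le_trans with y; [simpl; unfold y; lra|].
  apply (proj1 (CV_radius_bounded g)).
  exists (exp (r * y)). intros k.
  rewrite Rabs_mult, (Rabs_pos_eq (y ^ k)) by (apply pow_le; lra).
  apply Rle_trans with (r ^ k / INR (fact k) * y ^ k).
  { apply Rmult_le_compat_r; [apply pow_le; lra | apply Hg]. }
  apply Rle_trans with ((r * y) ^ k / INR (fact k)).
  { right. rewrite Rpow_mult_distr. field. apply Rgt_not_eq, INR_fact_pos. }
  eapply Rle_trans; [|apply (exp_ge_taylor _ k); nra].
  destruct k as [|k]; [simpl; lra|].
  rewrite tech5.
  assert (0 <= sum_f_R0 (fun i => (r * y) ^ i / INR (fact i)) k).
  { apply cond_pos_sum. intros i. apply Rdiv_le_0_compat; [apply pow_le; nra | apply INR_fact_pos]. }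
  lra.
Qed.

Lemma Rabs_tail2_le (g : nat -> R) (l r : R) : 0 <= r ->
  (forall k, Rabs (g k) <= r ^ k / INR (fact k)) -> is_lim_seq (sum_n g) l ->
  Rabs (l - g 0%nat - g 1%nat) <= r ^ 2 * exp r.
Proof.
  intros Hr Hg Hl.
  apply (is_lim_seq_Rabs_le (fun N => sum_n (fun k => g (S (S k))) N)).
  - apply (is_lim_seq_ext (fun N => sum_n g (S (S N)) - g 0%nat - g 1%nat)).
    + intros N. induction N as [|N IH].
      * rewrite !sum_Sn, !sum_O. simpl. unfold plus; simpl. ring.
      * rewrite (sum_Sn _ N), <- IH, (sum_Sn g (S (S N))). unfold plus; simpl. ring.
    + apply is_lim_seq_minus'; [apply is_lim_seq_minus'|]; auto using is_lim_seq_const.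
      apply (is_lim_seq_incr_n (sum_n g) 2) in Hl.
      apply (is_lim_seq_ext _ _ _ (fun N => f_equal (sum_n g) (Nat.add_comm N 2)) Hl).
  - intros N. eapply Rle_trans.
    { apply (sum_n_Rabs_le _ (fun k => r ^ 2 * (r ^ k / INR (fact k)))). intros k _.
      eapply Rle_trans; [apply Hg|]. unfold Rdiv. rewrite <- Rmult_assoc, <- pow_add.
      apply Rmult_le_compat_l; [apply pow_le; lra|].
      apply Rinv_le_contravar; [apply INR_fact_pos|]. apply le_INR.
      rewrite !fact_simpl. pose proof (lt_O_fact k). nia. }
    rewrite sum_n_Rmult_l.
    apply Rmult_le_compat_l; [apply pow_le; lra|].
    rewrite sum_n_Reals. apply exp_ge_taylor, Hr.
Qed.

Section ExpSeries.
Variable c : C.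

Definition exp_coef_re (k : nat) : R := Re (Cpow c k) / INR (fact k).
Definition exp_coef_im (k : nat) : R := Im (Cpow c k) / INR (fact k).

Lemma Rabs_exp_coef_re (k : nat) : Rabs (exp_coef_re k) <= Cmod c ^ k / INR (fact k).
Proof.
  unfold exp_coef_re, Rdiv. rewrite Rabs_mult, Rabs_inv, <- Cmod_pow.
  rewrite (Rabs_pos_eq (INR _)) by (left; apply INR_fact_pos).
  apply Rmult_le_compat_r; [left; apply Rinv_0_lt_compat, INR_fact_pos | apply re_le_Cmod].
Qed.

Lemma Rabs_exp_coef_im (k : nat) : Rabs (exp_coef_im k) <= Cmod c ^ k / INR (fact k).
Proof.
  unfold exp_coef_im, Rdiv. rewrite Rabs_mult, Rabs_inv, <- Cmod_pow.
  rewrite (Rabs_pos_eq (INR _)) by (left; apply INR_fact_pos).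
  apply Rmult_le_compat_r; [left; apply Rinv_0_lt_compat, INR_fact_pos | apply im_le_Cmod].
Qed.

Lemma CV_radius_exp_coef_re x : Rbar_lt (Rabs x) (CV_radius exp_coef_re).
Proof. apply (CV_radius_factorial_bound _ (Cmod c)); [apply Cmod_ge_0 | apply Rabs_exp_coef_re]. Qed.

Lemma CV_radius_exp_coef_im x : Rbar_lt (Rabs x) (CV_radius exp_coef_im).
Proof. apply (CV_radius_factorial_bound _ (Cmod c)); [apply Cmod_ge_0 | apply Rabs_exp_coef_im]. Qed.

(* [c^(k+1) / (k+1)! * (k+1) = c * c^k / k!], split into real and imaginary parts *)
Lemma PS_derive_exp_coef_re k :
  PS_derive exp_coef_re k = Re c * exp_coef_re k - Im c * exp_coef_im k.
Proof.
  unfold PS_derive, exp_coef_re, exp_coef_im. rewrite fact_simpl, mult_INR, S_INR.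
  simpl Cpow. unfold Re, Im, Cmult; simpl.
  field. split; [apply Rgt_not_eq, INR_fact_pos | pose proof (pos_INR k); lra].
Qed.

Lemma PS_derive_exp_coef_im k :
  PS_derive exp_coef_im k = Im c * exp_coef_re k + Re c * exp_coef_im k.
Proof.
  unfold PS_derive, exp_coef_re, exp_coef_im. rewrite fact_simpl, mult_INR, S_INR.
  simpl Cpow. unfold Re, Im, Cmult; simpl.
  field. split; [apply Rgt_not_eq, INR_fact_pos | pose proof (pos_INR k); lra].
Qed.

Lemma PSeries_lin_comb (p q : nat -> R) (a b t : R) :
  ex_pseries p t -> ex_pseries q t ->
  PSeries (fun k => a * p k + b * q k) t = a * PSeries p t + b * PSeries q t.
Proof.
  intros Hp Hq. rewrite <- (PSeries_scal a p), <- (PSeries_scal b q), <- PSeries_plus.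
  - reflexivity.
  - apply ex_pseries_scal; [apply Rmult_comm | exact Hp].
  - apply ex_pseries_scal; [apply Rmult_comm | exact Hq].
Qed.

Lemma is_derive_PSeries_exp_coef_re t :
  is_derive (PSeries exp_coef_re) t
    (Re c * PSeries exp_coef_re t - Im c * PSeries exp_coef_im t).
Proof.
  replace (Re c * _ - _) with (PSeries (PS_derive exp_coef_re) t).
  - apply is_derive_PSeries, CV_radius_exp_coef_re.
  - rewrite (PSeries_ext _ (fun k => Re c * exp_coef_re k + (- Im c) * exp_coef_im k))
      by (intros k; rewrite PS_derive_exp_coef_re; ring).
    rewrite PSeries_lin_comb
      by (apply CV_radius_inside; apply CV_radius_exp_coef_re || apply CV_radius_exp_coef_im).
    ring.
Qed.

Lemma is_derive_PSeries_exp_coef_im t :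
  is_derive (PSeries exp_coef_im) t
    (Im c * PSeries exp_coef_re t + Re c * PSeries exp_coef_im t).
Proof.
  replace (Im c * _ + _) with (PSeries (PS_derive exp_coef_im) t).
  - apply is_derive_PSeries, CV_radius_exp_coef_im.
  - rewrite (PSeries_ext _ (fun k => Im c * exp_coef_re k + Re c * exp_coef_im k))
      by (intros k; apply PS_derive_exp_coef_im).
    rewrite PSeries_lin_comb
      by (apply CV_radius_inside; apply CV_radius_exp_coef_re || apply CV_radius_exp_coef_im).
    reflexivity.
Qed.

End ExpSeries.

Lemma is_derive_0_const (g : R -> R) : (forall t, is_derive g t 0) -> forall t, g t = g 0.
Proof.
  intros H t.
  destruct (MVT_cor4 g (fun _ => 0) 0 (Rabs (t - 0)) (fun x _ => H x) t (Rle_refl _)) as [x [Hx _]].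
  lra.
Qed.

(* Both sides solve [F' = c F] with [F 0 = 1], so [cexp (- c s) * F s] has derivative zero. *)
Lemma PSeries_exp_coef (c : C) (t : R) :
  (PSeries (exp_coef_re c) t, PSeries (exp_coef_im c) t) = cexp (Re c * t, Im c * t).
Proof.
  set (a := Re c); set (b := Im c).
  set (f1 := PSeries (exp_coef_re c)); set (f2 := PSeries (exp_coef_im c)).
  set (g := fun s : R => Cmult (cexp (- (a * s), - (b * s))) (f1 s, f2 s)).
  assert (D1 := is_derive_PSeries_exp_coef_re c). assert (D2 := is_derive_PSeries_exp_coef_im c).
  fold a b f1 f2 in D1, D2.
  assert (Hg' : forall s, is_derive (fun s => Re (g s)) s 0 /\ is_derive (fun s => Im (g s)) s 0).
  { intros s.
    assert (E1 : ex_derive f1 s) by (eexists; apply D1).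
    assert (E2 : ex_derive f2 s) by (eexists; apply D2).
    assert (Df1 : Derive (fun x : R => f1 x) s = a * f1 s - b * f2 s) by apply is_derive_unique, D1.
    assert (Df2 : Derive (fun x : R => f2 x) s = b * f1 s + a * f2 s) by apply is_derive_unique, D2.
    unfold g, cexp, Cmult, Re, Im; simpl.
    split; auto_derive; auto; rewrite Df1, Df2; ring. }
  assert (Hg0 : g 0 = 1%C).
  { unfold g, f1, f2. rewrite !PSeries_0, !Rmult_0_r, !Ropp_0.
    change (0, 0) with (RtoC 0). rewrite cexp_0, Cmult_1_l.
    unfold exp_coef_re, exp_coef_im; simpl. unfold RtoC. f_equal; field. }
  assert (Hg : g t = 1%C).
  { apply injective_projections.
    - change (Re (g t) = Re 1). rewrite (is_derive_0_const _ (fun s => proj1 (Hg' s)) t), Hg0. reflexivity.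
    - change (Im (g t) = Im 1). rewrite (is_derive_0_const _ (fun s => proj2 (Hg' s)) t), Hg0. reflexivity. }
  transitivity (Cmult (cexp (a * t, b * t)) (g t)).
  - unfold g. rewrite Cmult_assoc, <- cexp_plus.
    replace (Cplus (a * t, b * t) (- (a * t), - (b * t))) with (RtoC 0)
      by (unfold Cplus, RtoC; simpl; f_equal; ring).
    rewrite cexp_0, Cmult_1_l. reflexivity.
  - rewrite Hg, Cmult_1_r. reflexivity.
Qed.

Lemma is_lim_seq_PSeries_1 (p : nat -> R) :
  ex_pseries p 1 -> is_lim_seq (sum_n p) (PSeries p 1).
Proof.
  intros H. apply ex_pseries_R, Series_correct in H.
  apply (is_lim_seq_ext (sum_n (fun k => p k * 1 ^ k))); [|exact H].
  intros N. apply sum_n_ext. intros k. rewrite pow1. apply Rmult_1_r.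
Qed.

Lemma is_lim_seq_sum_exp_coef_re (c : C) : is_lim_seq (sum_n (exp_coef_re c)) (Re (cexp c)).
Proof.
  replace (Re (cexp c)) with (Re (PSeries (exp_coef_re c) 1, PSeries (exp_coef_im c) 1)).
  - apply is_lim_seq_PSeries_1, CV_radius_inside, CV_radius_exp_coef_re.
  - rewrite PSeries_exp_coef, !Rmult_1_r. destruct c; reflexivity.
Qed.

Lemma is_lim_seq_sum_exp_coef_im (c : C) : is_lim_seq (sum_n (exp_coef_im c)) (Im (cexp c)).
Proof.
  replace (Im (cexp c)) with (Im (PSeries (exp_coef_re c) 1, PSeries (exp_coef_im c) 1)).
  - apply is_lim_seq_PSeries_1, CV_radius_inside, CV_radius_exp_coef_im.
  - rewrite PSeries_exp_coef, !Rmult_1_r. destruct c; reflexivity.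
Qed.

Lemma exp_star_cexp (c : C) : exp_star c = cexp c.
Proof.
  assert (Hdiv : forall k, (Cpow c k / RtoC (INR (fact k)))%C = (exp_coef_re c k, exp_coef_im c k)).
  { intros k. assert (Hk := INR_fact_pos k). unfold exp_coef_re, exp_coef_im.
    destruct (Cpow c k) as [x y]. unfold Cdiv, Cmult, Cinv, RtoC, Re, Im; simpl.
    f_equal; field; lra. }
  unfold exp_star, Clim_seq.
  rewrite (Lim_seq_ext _ (sum_n (exp_coef_re c)))
    by (intros N; rewrite sum_n_Re; apply sum_n_ext; intros k; rewrite Hdiv; reflexivity).
  rewrite (Lim_seq_ext (fun N => Im _) (sum_n (exp_coef_im c)))
    by (intros N; rewrite sum_n_Im; apply sum_n_ext; intros k; rewrite Hdiv; reflexivity).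
  rewrite (is_lim_seq_unique _ _ (is_lim_seq_sum_exp_coef_re c)),
          (is_lim_seq_unique _ _ (is_lim_seq_sum_exp_coef_im c)).
  apply surjective_pairing.
Qed.

Lemma cexp_taylor (z : C) : Cmod (cexp z - 1 - z) <= 2 * Cmod z ^ 2 * exp (Cmod z).
Proof.
  eapply Rle_trans; [apply Cmod_le_Rabs_re_im|].
  assert (Hre := Rabs_tail2_le _ _ _ (Cmod_ge_0 z) (Rabs_exp_coef_re z) (is_lim_seq_sum_exp_coef_re z)).
  assert (Him := Rabs_tail2_le _ _ _ (Cmod_ge_0 z) (Rabs_exp_coef_im z) (is_lim_seq_sum_exp_coef_im z)).
  replace (exp_coef_re z 0) with 1 in Hre by (unfold exp_coef_re, Re; simpl; field).
  replace (exp_coef_re z 1) with (Re z) in Hre by (unfold exp_coef_re, Re; simpl; field).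
  replace (exp_coef_im z 0) with 0 in Him by (unfold exp_coef_im, Im; simpl; field).
  replace (exp_coef_im z 1) with (Im z) in Him by (unfold exp_coef_im, Im; simpl; field).
  replace (Re (cexp z - 1 - z)) with (Re (cexp z) - 1 - Re z)
    by (unfold Cminus, Cplus, Copp, RtoC, Re; simpl; ring).
  replace (Im (cexp z - 1 - z)) with (Im (cexp z) - 0 - Im z)
    by (unfold Cminus, Cplus, Copp, RtoC, Im; simpl; ring).
  lra.
Qed.

(** * Box sums over the lattice *)

Definition zsumG {G : AbelianMonoid} (N : nat) (g : Z -> G) : G :=
  sum_n (fun t => g (Z.of_nat t - Z.of_nat N)%Z) (2 * N).

Fixpoint boxsumG {G : AbelianMonoid} (k N : nat) (F : (nat -> Z) -> G) : G :=
  match k with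
  | O => zsumG N (fun z => F (fun _ => z))
  | S k' => zsumG N (fun z => boxsumG k' N (fun m => F (fun j => if Nat.eqb j (S k') then z else m j)))
  end.

Lemma boxsum_boxsumG (k N : nat) (F : (nat -> Z) -> C) :
  boxsum k N F = @boxsumG C_AbelianMonoid k N F.
Proof.
  revert F. induction k as [|k IH]; intros F; [reflexivity|].
  simpl. unfold zsum, zsumG. apply sum_n_ext. intros t. apply IH.
Qed.

Section BoxsumMorphism.
Context {G H : AbelianMonoid} (phi : G -> H).
Hypothesis phi_plus : forall x y, phi (plus x y) = plus (phi x) (phi y).

Lemma sum_n_morph (f : nat -> G) (N : nat) : phi (sum_n f N) = sum_n (fun k => phi (f k)) N.
Proof.
  induction N as [|N IH]; [now rewrite !sum_O|].
  now rewrite !sum_Sn, phi_plus, IH.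
Qed.

Lemma boxsumG_morph (k N : nat) (F : (nat -> Z) -> G) :
  phi (boxsumG k N F) = boxsumG k N (fun m => phi (F m)).
Proof.
  revert F. induction k as [|k IH]; intros F; simpl; unfold zsumG; rewrite sum_n_morph;
    [reflexivity|].
  apply sum_n_ext. intros t. apply IH.
Qed.

End BoxsumMorphism.

Lemma boxsumG_plus {G : AbelianMonoid} (k N : nat) (F1 F2 : (nat -> Z) -> G) :
  boxsumG k N (fun m => plus (F1 m) (F2 m)) = plus (boxsumG k N F1) (boxsumG k N F2).
Proof.
  revert F1 F2. induction k as [|k IH]; intros F1 F2; simpl; unfold zsumG; rewrite <- sum_n_plus;
    [reflexivity|].
  apply sum_n_ext. intros t. apply IH.
Qed.

Definition zsumR (N : nat) (g : Z -> R) : R := @zsumG R_AbelianMonoid N g.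
Definition boxsumR (k N : nat) (f : (nat -> Z) -> R) : R := @boxsumG R_AbelianMonoid k N f.

Lemma boxsumR_le (k N : nat) (f g : (nat -> Z) -> R) :
  (forall m, f m <= g m) -> boxsumR k N f <= boxsumR k N g.
Proof.
  unfold boxsumR. revert f g.
  induction k as [|k IH]; intros f g H; simpl; unfold zsumG; apply sum_n_Rle; intros t _; auto.
Qed.

Lemma boxsumR_scal (k N : nat) (c : R) (f : (nat -> Z) -> R) :
  boxsumR k N (fun m => c * f m) = c * boxsumR k N f.
Proof.
  symmetry. apply (boxsumG_morph (G := R_AbelianMonoid) (H := R_AbelianMonoid) (Rmult c)).
  apply Rmult_plus_distr_l.
Qed.

Lemma boxsumR_plus (k N : nat) (f g : (nat -> Z) -> R) :
  boxsumR k N (fun m => f m + g m) = boxsumR k N f + boxsumR k N g.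
Proof. apply (boxsumG_plus (G := R_AbelianMonoid)). Qed.

Lemma boxsumR_nonneg (k N : nat) (f : (nat -> Z) -> R) :
  (forall m, 0 <= f m) -> 0 <= boxsumR k N f.
Proof.
  intros H. replace 0 with (0 * boxsumR k N f) by ring.
  rewrite <- boxsumR_scal. apply boxsumR_le. intros m. rewrite Rmult_0_l. apply H.
Qed.

Lemma Rabs_boxsumR_le (k N : nat) (f : (nat -> Z) -> R) :
  Rabs (boxsumR k N f) <= boxsumR k N (fun m => Rabs (f m)).
Proof.
  apply Rabs_le. split.
  - replace (- _) with (-1 * boxsumR k N (fun m => Rabs (f m))) by ring.
    rewrite <- boxsumR_scal. apply boxsumR_le. intros m.
    pose proof (Rabs_le_between' (f m)). pose proof (Rle_abs (- f m)). rewrite Rabs_Ropp in *. lra.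
  - apply boxsumR_le. intros m. apply Rle_abs.
Qed.

Lemma zsumR_S (N : nat) (g : Z -> R) :
  zsumR (S N) g = g (- Z.of_nat (S N))%Z + zsumR N g + g (Z.of_nat (S N)).
Proof.
  unfold zsumR, zsumG. replace (2 * S N)%nat with (S (S (2 * N))) by lia.
  rewrite sum_n_shift, sum_Sn.
  replace (Z.of_nat 0 - Z.of_nat (S N))%Z with (- Z.of_nat (S N))%Z by lia.
  replace (Z.of_nat (S (S (2 * N))) - Z.of_nat (S N))%Z with (Z.of_nat (S N)) by lia.
  rewrite (sum_n_ext (fun k => g (Z.of_nat (S k) - Z.of_nat (S N))%Z)
                     (fun t => g (Z.of_nat t - Z.of_nat N)%Z)) by (intros t; f_equal; lia).
  unfold plus; simpl. ring.
Qed.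

Lemma boxsumR_le_S (k N : nat) (f : (nat -> Z) -> R) :
  (forall m, 0 <= f m) -> boxsumR k N f <= boxsumR k (S N) f.
Proof.
  unfold boxsumR. revert f. induction k as [|k IH]; intros f H; simpl.
  - fold (zsumR N (fun z => f (fun _ => z))) (zsumR (S N) (fun z => f (fun _ => z))).
    rewrite zsumR_S.
    pose proof (H (fun _ => (- Z.of_nat (S N))%Z)). pose proof (H (fun _ => Z.of_nat (S N))). lra.
  - set (h := fun n z => boxsumG (G := R_AbelianMonoid) k n
                 (fun m => f (fun j => if Nat.eqb j (S k) then z else m j))).
    change (zsumR N (h N) <= zsumR (S N) (h (S N))).
    assert (Hh : forall n z, 0 <= h n z) by (intros n z; apply boxsumR_nonneg; auto).
    apply Rle_trans with (zsumR N (h (S N))).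
    + apply sum_n_Rle. intros t _. apply IH. auto.
    + rewrite zsumR_S.
      pose proof (Hh (S N) (- Z.of_nat (S N))%Z). pose proof (Hh (S N) (Z.of_nat (S N))). lra.
Qed.

Lemma zsumR_mult_r (N : nat) (g : Z -> R) (c : R) :
  zsumR N (fun z => g z * c) = zsumR N g * c.
Proof. apply (sum_n_mult_r (K := R_Ring)). Qed.

Lemma boxsumR_exp_sum (k N : nat) (psi : Z -> R) :
  boxsumR k N (fun m => exp (sum_n (fun j => psi (m j)) k)) = zsumR N (fun z => exp (psi z)) ^ S k.
Proof.
  induction k as [|k IH].
  - unfold boxsumR, zsumR. simpl. rewrite Rmult_1_r. apply sum_n_ext. intros t. rewrite sum_O. reflexivity.
  - unfold boxsumR; simpl boxsumG. fold (boxsumR k N).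
    transitivity (zsumR N (fun z => exp (psi z) * boxsumR k N (fun m => exp (sum_n (fun j => psi (m j)) k)))).
    + apply sum_n_ext. intros t. rewrite <- boxsumR_scal. unfold boxsumR. f_equal.
      apply functional_extensionality. intros m.
      rewrite sum_Sn, Nat.eqb_refl, Rmult_comm. unfold plus; simpl. rewrite exp_plus. f_equal. f_equal.
      apply sum_n_ext_loc. intros j Hj. destruct (Nat.eqb_spec j (S k)); [lia | reflexivity].
    + rewrite IH, zsumR_mult_r. reflexivity.
Qed.

Lemma zsumR_gaussian_le (b : R) (N : nat) : 0 < b ->
  zsumR N (fun z => exp (- b * IZR z ^ 2)) <= 1 + 2 * exp (- b) / (1 - exp (- b)).
Proof.
  intros Hb. set (rho := exp (- b)).
  assert (Hrho : 0 < rho < 1) by (split; [apply exp_pos | rewrite <- exp_0; apply exp_increasing; lra]).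
  assert (Htail : forall k : nat, exp (- b * INR k ^ 2) <= rho ^ k).
  { intros k. unfold rho. rewrite <- exp_mult_INR. apply exp_le.
    assert (INR k <= INR k ^ 2) by (destruct k; [simpl; lra | rewrite S_INR; pose proof (pos_INR k); nra]).
    nra. }
  assert (H : zsumR N (fun z => exp (- b * IZR z ^ 2)) <= 1 + 2 * rho * (1 - rho ^ N) / (1 - rho)).
  { induction N as [|N IH].
    - unfold zsumR, zsumG. rewrite sum_O. simpl. rewrite Rmult_0_l, Rmult_0_r, exp_0.
      right. field. lra.
    - rewrite zsumR_S, opp_IZR, <- INR_IZR_INZ.
      replace ((- INR (S N)) ^ 2) with (INR (S N) ^ 2) by ring.
      apply Rle_trans with (1 + 2 * rho * (1 - rho ^ N) / (1 - rho) + 2 * rho ^ S N).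
      + pose proof (Htail (S N)). lra.
      + right. simpl. field. lra. }
  eapply Rle_trans; [exact H|]. apply Rplus_le_compat_l.
  unfold Rdiv. apply Rmult_le_compat_r; [left; apply Rinv_0_lt_compat; lra|].
  pose proof (pow_le rho N ltac:(lra)). nra.
Qed.

Definition is_Clim_seq (a : nat -> C) (l : C) : Prop :=
  is_lim_seq (fun N => Re (a N)) (Re l) /\ is_lim_seq (fun N => Im (a N)) (Im l).

Lemma is_Clim_seq_unique (a : nat -> C) (l : C) : is_Clim_seq a l -> Clim_seq a = l.
Proof.
  intros [H1 H2]. unfold Clim_seq.
  rewrite (is_lim_seq_unique _ _ H1), (is_lim_seq_unique _ _ H2). destruct l; reflexivity.
Qed.

Lemma is_Clim_seq_ext (a b : nat -> C) (l : C) :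
  (forall N, a N = b N) -> is_Clim_seq a l -> is_Clim_seq b l.
Proof.
  intros H [H1 H2]. split.
  - apply (is_lim_seq_ext _ _ _ (fun N => f_equal Re (H N)) H1).
  - apply (is_lim_seq_ext _ _ _ (fun N => f_equal Im (H N)) H2).
Qed.

Lemma is_Clim_seq_plus (a b : nat -> C) (la lb : C) :
  is_Clim_seq a la -> is_Clim_seq b lb -> is_Clim_seq (fun N => a N + b N)%C (la + lb)%C.
Proof. intros [A1 A2] [B1 B2]. split; apply is_lim_seq_plus'; auto. Qed.

Lemma is_Clim_seq_scal (c : C) (a : nat -> C) (l : C) :
  is_Clim_seq a l -> is_Clim_seq (fun N => c * a N)%C (c * l)%C.
Proof.
  intros [A1 A2]. unfold Cmult, Re, Im in *; simpl in *. split.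
  - apply is_lim_seq_minus'; apply is_lim_seq_mult'; auto using is_lim_seq_const.
  - apply is_lim_seq_plus'; apply is_lim_seq_mult'; auto using is_lim_seq_const.
Qed.

Lemma is_Clim_seq_minus (a b : nat -> C) (la lb : C) :
  is_Clim_seq a la -> is_Clim_seq b lb -> is_Clim_seq (fun N => a N - b N)%C (la - lb)%C.
Proof.
  intros Ha Hb.
  apply (is_Clim_seq_ext (fun N => a N + (- 1) * b N)%C); [intros N; ring|].
  replace (la - lb)%C with (la + (- 1) * lb)%C by ring.
  apply is_Clim_seq_plus, is_Clim_seq_scal; auto.
Qed.

Lemma is_Clim_seq_sum_n (a : nat -> nat -> C) (l : nat -> C) (n : nat) :
  (forall i, (i <= n)%nat -> is_Clim_seq (a i) (l i)) ->
  is_Clim_seq (fun N => sum_n (fun i => a i N) n) (sum_n l n).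
Proof.
  induction n as [|n IH]; intros H.
  - rewrite sum_O. apply (is_Clim_seq_ext (a 0%nat)); [intros N; rewrite sum_O; auto | apply H; lia].
  - rewrite sum_Sn. apply (is_Clim_seq_ext (fun N => sum_n (fun i => a i N) n + a (S n) N)%C).
    + intros N. rewrite sum_Sn. reflexivity.
    + apply is_Clim_seq_plus; [apply IH; intros; apply H; lia | apply H; lia].
Qed.

Lemma boxsum_plus (k N : nat) (F G : (nat -> Z) -> C) :
  boxsum k N (fun m => F m + G m)%C = (boxsum k N F + boxsum k N G)%C.
Proof. rewrite !boxsum_boxsumG. apply (boxsumG_plus (G := C_AbelianMonoid)). Qed.

Lemma boxsum_scal (k N : nat) (c : C) (F : (nat -> Z) -> C) :
  boxsum k N (fun m => c * F m)%C = (c * boxsum k N F)%C.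
Proof.
  rewrite !boxsum_boxsumG. symmetry.
  apply (boxsumG_morph (G := C_AbelianMonoid) (H := C_AbelianMonoid) (Cmult c)).
  apply Cmult_plus_distr_l.
Qed.

Lemma boxsum_minus (k N : nat) (F G : (nat -> Z) -> C) :
  boxsum k N (fun m => F m - G m)%C = (boxsum k N F - boxsum k N G)%C.
Proof.
  rewrite (functional_extensionality (fun m => F m - G m)%C (fun m => F m + (- 1) * G m)%C)
    by (intros m; ring).
  rewrite boxsum_plus, boxsum_scal. ring.
Qed.

Lemma boxsum_sum_n (k N : nat) (F : nat -> (nat -> Z) -> C) (n : nat) :
  sum_n (fun i => boxsum k N (F i)) n = boxsum k N (fun m => sum_n (fun i => F i m) n).
Proof.
  induction n as [|n IH].
  - rewrite sum_O. f_equal. apply functional_extensionality. intros m. rewrite sum_O. reflexivity.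
  - rewrite sum_Sn, IH.
    rewrite (functional_extensionality (fun m => sum_n (fun i => F i m) (S n))
               (fun m => sum_n (fun i => F i m) n + F (S n) m)%C) by (intros m; rewrite sum_Sn; reflexivity).
    symmetry. apply boxsum_plus.
Qed.

Lemma boxsum_Re (k N : nat) (F : (nat -> Z) -> C) :
  Re (boxsum k N F) = boxsumR k N (fun m => Re (F m)).
Proof.
  rewrite boxsum_boxsumG.
  apply (boxsumG_morph (G := C_AbelianMonoid) (H := R_AbelianMonoid) Re). reflexivity.
Qed.

Lemma boxsum_Im (k N : nat) (F : (nat -> Z) -> C) :
  Im (boxsum k N F) = boxsumR k N (fun m => Im (F m)).
Proof.
  rewrite boxsum_boxsumG.
  apply (boxsumG_morph (G := C_AbelianMonoid) (H := R_AbelianMonoid) Im). reflexivity.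
Qed.

(* [f = (f + M) - M], and both [f + M] and [M] have box sums nondecreasing in [N] *)
Lemma boxsumR_cvg_dominated (k : nat) (f M : (nat -> Z) -> R) (B : R) :
  (forall m, Rabs (f m) <= M m) -> (forall N, boxsumR k N M <= B) ->
  exists l : R, is_lim_seq (fun N => boxsumR k N f) l /\ Rabs l <= B.
Proof.
  intros Hf HB.
  assert (HfM : forall m, - M m <= f m <= M m) by (intros m; apply Rabs_le_between, Hf).
  assert (HM : forall m, 0 <= M m) by (intros m; specialize (HfM m); lra).
  destruct (ex_finite_lim_seq_incr (fun N => boxsumR k N (fun m => f m + M m)) (2 * B)) as [lu Hu].
  { intros N. apply boxsumR_le_S. intros m. specialize (HfM m). lra. }
  { intros N. rewrite boxsumR_plus.
    assert (boxsumR k N f <= boxsumR k N M) by (apply boxsumR_le; intros m; apply HfM).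
    specialize (HB N). lra. }
  destruct (ex_finite_lim_seq_incr (fun N => boxsumR k N M) B) as [lv Hv].
  { intros N. apply boxsumR_le_S, HM. }
  { exact HB. }
  assert (Hl : is_lim_seq (fun N => boxsumR k N f) (lu - lv)).
  { apply (is_lim_seq_ext (fun N => boxsumR k N (fun m => f m + M m) - boxsumR k N M)).
    - intros N. rewrite boxsumR_plus. ring.
    - apply is_lim_seq_minus'; auto. }
  exists (lu - lv). split; [exact Hl|].
  apply (is_lim_seq_Rabs_le _ _ _ Hl). intros N.
  eapply Rle_trans; [apply Rabs_boxsumR_le|].
  eapply Rle_trans; [apply boxsumR_le, Hf | apply HB].
Qed.

Lemma boxsum_cvg_dominated (k : nat) (F : (nat -> Z) -> C) (M : (nat -> Z) -> R) (B : R) :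
  (forall m, Cmod (F m) <= M m) -> (forall N, boxsumR k N M <= B) ->
  exists l, is_Clim_seq (fun N => boxsum k N F) l /\ Cmod l <= 2 * B.
Proof.
  intros HF HB.
  destruct (boxsumR_cvg_dominated k (fun m => Re (F m)) M B) as [l1 [H1 B1]]; auto.
  { intros m. eapply Rle_trans; [apply re_le_Cmod | apply HF]. }
  destruct (boxsumR_cvg_dominated k (fun m => Im (F m)) M B) as [l2 [H2 B2]]; auto.
  { intros m. eapply Rle_trans; [apply im_le_Cmod | apply HF]. }
  exists (l1, l2). split; [split|].
  - apply (is_lim_seq_ext _ _ _ (fun N => eq_sym (boxsum_Re k N F)) H1).
  - apply (is_lim_seq_ext _ _ _ (fun N => eq_sym (boxsum_Im k N F)) H2).
  - eapply Rle_trans; [apply Cmod_le_Rabs_re_im|]. simpl. lra.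
Qed.

(** * Gaussian decay on the lattice *)

Module LinearAlgebra.
Import all_boot all_algebra Rstruct GRing.Theory.

Lemma sum_n_big (f : nat -> R) (n : nat) : sum_n f n = (\sum_(i < n.+1) f i)%R.
Proof.
elim: n => [|n IH]; first by rewrite sum_O big_ord_recr big_ord0 /= GRing.add0r.
by rewrite (@sum_Sn R_AbelianMonoid) IH [RHS]big_ord_recr.
Qed.

(* [P] is the pseudo-inverse of the matrix [(Qb j i)_(j,i)], which is invertible by [lin_indep] *)
Lemma lin_indep_left_inverse (n : nat) (Qb : nat -> nat -> R) : lin_indep n Qb ->
  exists P : nat -> nat -> R, forall (x : nat -> R) (j : nat), (j <= n)%coq_nat ->
    x j = sum_n (fun i => sum_n (fun k => x k * Qb k i) n * P i j) n.
Proof.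
move=> hL.
pose A : 'M[R]_(n.+1) := (\matrix_(j, i) Qb j i)%R.
have fA : row_free A.
  apply: inj_row_free => v Hv; apply/matrixP => a b; rewrite (ord1 a) mxE.
  have := hL (fun j => v ord0 (inord j)) _ b (ssrnat.leP (ltn_ord b : (b <= n)%N)).
  rewrite inord_val; apply => i Hi; rewrite sum_n_big.
  transitivity ((v *m A)%R ord0 (inord i)); last by rewrite Hv mxE.
  rewrite mxE; apply: eq_bigr => k _.
  by rewrite mxE inord_val inordK //; apply/ssrnat.leP; apply: le_n_S.
exists (fun i j => pinvmx A (inord i) (inord j)) => x j /ssrnat.leP Hj.
pose v : 'rV[R]_(n.+1) := (\row_(k < n.+1) x k)%R.
have Hv : v = (v *m A *m pinvmx A)%R by rewrite -mulmxA mulmxVp // mulmx1.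
have := congr1 (fun M : 'M[R]_(1, n.+1) => M ord0 (inord j : 'I_n.+1)) Hv.
rewrite !mxE inordK // => ->.
rewrite sum_n_big; apply: eq_bigr => i _.
rewrite !mxE sum_n_big inord_val; congr (_ * _)%R.
by apply: eq_bigr => k _; rewrite !mxE.
Qed.

End LinearAlgebra.

Definition l1norm (n : nat) (q : nat -> R) : R := sum_n (fun i => Rabs (q i)) n.

Lemma sqnorm_nonneg (n : nat) (q : nat -> R) : 0 <= sqnorm n q.
Proof. apply sum_n_nonneg. intros i. nra. Qed.

Lemma l1norm_nonneg (n : nat) (q : nat -> R) : 0 <= l1norm n q.
Proof. apply sum_n_nonneg. intros i. apply Rabs_pos. Qed.

Lemma Rsqr_le_sqnorm (n : nat) (q : nat -> R) (i : nat) : (i <= n)%nat -> q i * q i <= sqnorm n q.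
Proof. intros Hi. apply (Rle_term_sum_n (fun j => q j * q j)); auto. intros j. nra. Qed.

Lemma Rabs_le_l1norm (n : nat) (q : nat -> R) (i : nat) : (i <= n)%nat -> Rabs (q i) <= l1norm n q.
Proof. intros Hi. apply (Rle_term_sum_n (fun j => Rabs (q j))); auto. intros j. apply Rabs_pos. Qed.

Lemma Rabs_le_1_plus_sqnorm (n : nat) (q : nat -> R) (i : nat) :
  (i <= n)%nat -> Rabs (q i) <= 1 + sqnorm n q.
Proof.
  intros Hi. pose proof (Rsqr_le_sqnorm n q i Hi).
  assert (Rabs (q i) * Rabs (q i) = q i * q i) by (rewrite <- Rabs_mult; apply Rabs_pos_eq; nra).
  pose proof (Rabs_pos (q i)). nra.
Qed.

Lemma l1norm_sqr_le (n : nat) (q : nat -> R) : l1norm n q ^ 2 <= INR (S n) ^ 2 * sqnorm n q.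
Proof.
  pose proof (sqnorm_nonneg n q).
  assert (Hi : forall i, (i <= n)%nat -> Rabs (q i) <= sqrt (sqnorm n q)).
  { intros i Hi. rewrite <- sqrt_Rsqr_abs. apply sqrt_le_1_alt. apply Rsqr_le_sqnorm, Hi. }
  assert (Hl : l1norm n q <= INR (S n) * sqrt (sqnorm n q)).
  { rewrite <- sum_n_const. apply sum_n_Rle, Hi. }
  rewrite <- (sqrt_sqrt (sqnorm n q)) by exact H.
  pose proof (l1norm_nonneg n q). pose proof (sqrt_pos (sqnorm n q)). nra.
Qed.

(* via a left inverse of the generator matrix *)
Lemma lattice_coercive (n : nat) (Qb : nat -> nat -> R) : lin_indep n Qb ->
  exists c0, 0 < c0 /\ forall m : nat -> Z,
    c0 * sum_n (fun j => IZR (m j) ^ 2) n <= sqnorm n (lattice_pt n Qb m).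
Proof.
  intros hL. destruct (LinearAlgebra.lin_indep_left_inverse n Qb hL) as [P HP].
  set (Kp := sum_n (fun i => sum_n (fun j => Rabs (P i j)) n) n).
  assert (HKp : forall i j, (i <= n)%nat -> (j <= n)%nat -> Rabs (P i j) <= Kp).
  { intros i j Hi Hj. eapply Rle_trans.
    - apply (Rle_term_sum_n (fun j => Rabs (P i j)) n j); auto using Rabs_pos.
    - apply (Rle_term_sum_n (fun i => sum_n (fun j => Rabs (P i j)) n) n i); auto.
      intros k. apply sum_n_nonneg. intros; apply Rabs_pos. }
  set (D := INR (S n) ^ 3 * Kp ^ 2 + 1).
  assert (HD : 0 < D)
    by (unfold D; pose proof (pow_le (INR (S n)) 3 (pos_INR _)); pose proof (pow2_ge_0 Kp); nra).
  exists (/ D). split; [apply Rinv_0_lt_compat, HD|]. intros m.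
  set (q := lattice_pt n Qb m).
  assert (Hm : forall j, (j <= n)%nat -> IZR (m j) ^ 2 <= (Kp * l1norm n q) ^ 2).
  { intros j Hj. rewrite <- (pow2_abs (IZR (m j))). apply pow_incr. split; [apply Rabs_pos|].
    rewrite (HP (fun j => IZR (m j)) j Hj). unfold l1norm. rewrite <- sum_n_Rmult_l.
    apply sum_n_Rabs_le. intros i Hi. rewrite Rabs_mult, Rmult_comm.
    apply Rmult_le_compat; auto using Rabs_pos, Rle_refl. }
  assert (Hsum : sum_n (fun j => IZR (m j) ^ 2) n <= INR (S n) ^ 3 * Kp ^ 2 * sqnorm n q).
  { eapply Rle_trans; [apply (sum_n_Rle _ (fun _ => (Kp * l1norm n q) ^ 2)), Hm|].
    rewrite sum_n_const, Rpow_mult_distr.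
    pose proof (l1norm_sqr_le n q). pose proof (pos_INR (S n)). pose proof (pow2_ge_0 Kp).
    replace (INR (S n) ^ 3 * Kp ^ 2 * sqnorm n q)
      with (INR (S n) * (Kp ^ 2 * (INR (S n) ^ 2 * sqnorm n q))) by ring.
    apply Rmult_le_compat_l; [lra|]. apply Rmult_le_compat_l; [lra | exact H]. }
  pose proof (sqnorm_nonneg n q).
  apply (Rmult_le_reg_l D); [exact HD|]. rewrite <- Rmult_assoc, Rinv_r, Rmult_1_l by lra.
  fold q. unfold D. pose proof (sum_n_nonneg (fun j => IZR (m j) ^ 2) n (fun j => pow2_ge_0 _)).
  pose proof (pow_le (INR (S n)) 3 (pos_INR _)). pose proof (pow2_ge_0 Kp). nra.
Qed.

Lemma l1norm_le_sqnorm (n : nat) (q : nat -> R) (eps : R) : 0 < eps ->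
  l1norm n q <= eps * sqnorm n q + INR (S n) / (4 * eps).
Proof.
  intros He. unfold l1norm, sqnorm.
  eapply Rle_trans; [apply (sum_n_Rle _ (fun i => eps * (q i * q i) + / (4 * eps)))|].
  - intros i _. replace (q i * q i) with (q i ^ 2) by ring. apply Rabs_le_eps_sqr, He.
  - rewrite sum_n_Rplus, sum_n_Rmult_l, sum_n_const. right. field. lra.
Qed.

(* half of the Gaussian decay absorbs the polynomial factor and the linear term *)
Lemma poly_exp_le_gaussian (n : nat) (a c : R) : 0 < a -> 0 <= c ->
  exists C, 0 <= C /\ forall q : nat -> R,
    (1 + sqnorm n q) ^ 3 * exp (- a * sqnorm n q + c * l1norm n q)
      <= C * exp (- (a / 2) * sqnorm n q).
Proof.
  intros Ha Hc.
  set (eps := a / (4 * (c + 1))).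
  assert (Heps : 0 < eps) by (unfold eps; apply Rdiv_lt_0_compat; lra).
  set (C1 := c * (INR (S n) / (4 * eps))).
  exists (27 * (4 / a) ^ 3 * exp (a / 4) * exp C1).
  split.
  { assert (0 <= (4 / a) ^ 3) by (apply pow_le, Rdiv_le_0_compat; lra).
    pose proof (exp_pos (a / 4)); pose proof (exp_pos C1).
    apply Rmult_le_pos; [apply Rmult_le_pos; [nra | lra] | lra]. }
  intros q. pose proof (sqnorm_nonneg n q) as Hs. set (s := sqnorm n q) in *.
  assert (HL : c * l1norm n q <= a / 4 * s + C1).
  { assert (c * eps <= a / 4).
    { unfold eps. apply (Rmult_le_reg_r (4 * (c + 1))); [lra|].
      replace (c * (a / (4 * (c + 1))) * (4 * (c + 1))) with (c * a) by (field; lra). nra. }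
    pose proof (l1norm_le_sqnorm n q eps Heps). unfold C1. fold s in H0. nra. }
  assert (Hcube : (1 + s) ^ 3 <= 27 * (4 / a) ^ 3 * exp (a / 4 * (1 + s))).
  { replace ((1 + s) ^ 3) with ((4 / a) ^ 3 * (a / 4 * (1 + s)) ^ 3) by (field; lra).
    rewrite (Rmult_comm 27), Rmult_assoc. apply Rmult_le_compat_l.
    - apply pow_le, Rdiv_le_0_compat; lra.
    - apply cube_le_exp. nra. }
  apply Rle_trans with (27 * (4 / a) ^ 3 * exp (a / 4 * (1 + s)) * exp (- a * s + (a / 4 * s + C1))).
  - apply Rmult_le_compat; [apply pow_le; lra | left; apply exp_pos | exact Hcube |].
    apply exp_le. lra.
  - assert (E : exp (a / 4 * (1 + s)) * exp (- a * s + (a / 4 * s + C1))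
                 = exp (a / 4) * exp C1 * exp (- (a / 2) * s))
      by (rewrite <- !exp_plus; f_equal; field).
    right. rewrite Rmult_assoc, E. ring.
Qed.

Lemma lattice_gaussian_dominated (n : nat) (Qb : nat -> nat -> R) (a c K : R) :
  lin_indep n Qb -> 0 < a -> 0 <= c -> 0 <= K ->
  exists (M : (nat -> Z) -> R) (B : R), (forall N, boxsumR n N M <= B) /\
    forall m, let q := lattice_pt n Qb m in
      K * (1 + sqnorm n q) ^ 3 * exp (- a * sqnorm n q + c * l1norm n q) <= M m.
Proof.
  intros hL Ha Hc HK.
  destruct (lattice_coercive n Qb hL) as [c0 [Hc0 Hco]].
  destruct (poly_exp_le_gaussian n a c Ha Hc) as [C [HC HpC]].
  set (b := a / 2 * c0).
  exists (fun m => K * C * exp (sum_n (fun j => - b * IZR (m j) ^ 2) n)).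
  exists (K * C * (1 + 2 * exp (- b) / (1 - exp (- b))) ^ S n).
  split.
  - intros N. rewrite boxsumR_scal.
    rewrite (boxsumR_exp_sum n N (fun z => - b * IZR z ^ 2)).
    apply Rmult_le_compat_l; [nra|]. apply pow_incr. split.
    + apply sum_n_nonneg. intros; left; apply exp_pos.
    + apply zsumR_gaussian_le. unfold b. nra.
  - intros m q. rewrite Rmult_assoc, Rmult_assoc. apply Rmult_le_compat_l; [exact HK|].
    eapply Rle_trans; [apply HpC|]. apply Rmult_le_compat_l; [exact HC|]. apply exp_le.
    rewrite sum_n_Rmult_l. specialize (Hco m). fold q in Hco. unfold b. nra.
Qed.

(** * Termwise differentiation *)

Lemma is_derive_quadratic_remainder {K : AbsRing} {V : NormedModule K}
  (f : K -> V) (x : K) (l : V) (r c : R) : 0 < r -> 0 <= c ->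
  (forall h : K, abs h <= r -> norm (minus (minus (f (plus x h)) (f x)) (scal h l)) <= c * abs h ^ 2) ->
  is_derive f x l.
Proof.
  intros Hr Hc H. split; [apply is_linear_scal_l|].
  intros y Hy. apply (is_filter_lim_locally_unique (V := AbsRing_NormedModule K)) in Hy. subst y.
  intros eps. apply (locally_le_locally_norm (V := AbsRing_NormedModule K) x).
  assert (Hd : 0 < Rmin r (eps / (c + 1))).
  { apply Rmin_pos; [exact Hr | apply Rdiv_lt_0_compat; [apply cond_pos | lra]]. }
  exists (mkposreal _ Hd). intros z Hz. unfold ball_norm in Hz. simpl in Hz.
  set (h := minus z x) in *.
  assert (Ez : z = plus x h).
  { unfold h, minus. rewrite plus_comm, <- plus_assoc, (plus_opp_l (G := K)), plus_zero_r.
    reflexivity. }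
  change (norm (minus (minus (f z) (f x)) (scal h l)) <= eps * norm h).
  assert (Hh0 : 0 <= abs h) by apply abs_ge_0.
  assert (Hh : abs h < Rmin r (eps / (c + 1))) by exact Hz.
  pose proof (Rmin_l r (eps / (c + 1))); pose proof (Rmin_r r (eps / (c + 1))).
  rewrite Ez. eapply Rle_trans; [apply H; lra|].
  change (norm h) with (abs h).
  assert (abs h * (c + 1) <= eps).
  { apply Rle_trans with (eps / (c + 1) * (c + 1)); [apply Rmult_le_compat_r; lra | right; field; lra]. }
  simpl. nra.
Qed.

Lemma is_derive_Re_Im_of_remainder (f : R -> C) (x : R) (l : C) (r c : R) : 0 < r -> 0 <= c ->
  (forall h, Rabs h <= r -> Cmod (f (x + h)%R - f x - RtoC h * l)%C <= c * h ^ 2) ->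
  is_derive (fun y => Re (f y)) x (Re l) /\ is_derive (fun y => Im (f y)) x (Im l).
Proof.
  intros Hr Hc H.
  assert (Hre : forall h, Rabs h <= r -> Rabs (Re (f (x + h)) - Re (f x) - h * Re l) <= c * Rabs h ^ 2).
  { intros h Hh. rewrite pow2_abs. eapply Rle_trans; [|apply H, Hh].
    eapply Rle_trans; [|apply re_le_Cmod]. right. f_equal. unfold Re; simpl. ring. }
  assert (Him : forall h, Rabs h <= r -> Rabs (Im (f (x + h)) - Im (f x) - h * Im l) <= c * Rabs h ^ 2).
  { intros h Hh. rewrite pow2_abs. eapply Rle_trans; [|apply H, Hh].
    eapply Rle_trans; [|apply im_le_Cmod]. right. f_equal. unfold Im; simpl. ring. }
  split; apply (is_derive_quadratic_remainder _ _ _ r c Hr Hc); assumption.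
Qed.

Definition expsum_term (alpha beta gamma : (nat -> Z) -> C) (h : C) (m : nat -> Z) : C :=
  (gamma m * cexp (alpha m + beta m * h))%C.

Definition expsum (k : nat) (alpha beta gamma : (nat -> Z) -> C) (h : C) : C :=
  Clim_seq (fun N => boxsum k N (expsum_term alpha beta gamma h)).

Section ExpSum.
Variables (k : nat) (alpha beta gamma : (nat -> Z) -> C) (delta B : R) (M : (nat -> Z) -> R).
Hypothesis HM : forall m,
  Cmod (gamma m) * (1 + Cmod (beta m)) ^ 2 * exp (Re (alpha m) + Cmod (beta m) * delta) <= M m.
Hypothesis HB : forall N, boxsumR k N M <= B.

Lemma expsum_bound_nonneg : 0 <= B.
Proof.
  apply Rle_trans with (boxsumR k 0 M); [|apply HB]. apply boxsumR_nonneg. intros m.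
  eapply Rle_trans; [|apply HM]. pose proof (Cmod_ge_0 (gamma m)). pose proof (Cmod_ge_0 (beta m)).
  pose proof (exp_pos (Re (alpha m) + Cmod (beta m) * delta)). apply Rmult_le_pos; [nra | lra].
Qed.

Lemma Cmod_expsum_term (g : (nat -> Z) -> C) (h : C) (m : nat -> Z) :
  Cmod (expsum_term alpha beta g h m) = Cmod (g m) * exp (Re (alpha m) + Re (beta m * h)).
Proof. unfold expsum_term. rewrite Cmod_mult, Cmod_cexp. reflexivity. Qed.

Lemma expsum_cvg_of_le (g : (nat -> Z) -> C) (h : C) :
  (forall m, Cmod (g m) <= Cmod (gamma m) * (1 + Cmod (beta m)) ^ 2) -> Cmod h <= delta ->
  is_Clim_seq (fun N => boxsum k N (expsum_term alpha beta g h)) (expsum k alpha beta g h).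
Proof.
  intros Hg Hh.
  destruct (boxsum_cvg_dominated k (expsum_term alpha beta g h) M B) as [l [Hl _]]; [|exact HB|].
  - intros m. rewrite Cmod_expsum_term. eapply Rle_trans; [|apply HM].
    apply Rmult_le_compat; [apply Cmod_ge_0 | left; apply exp_pos | apply Hg|].
    apply exp_le. pose proof (Re_mult_le (beta m) h). pose proof (Cmod_ge_0 (beta m)). nra.
  - unfold expsum. rewrite (is_Clim_seq_unique _ _ Hl). exact Hl.
Qed.

Lemma expsum_cvg (h : C) : Cmod h <= delta ->
  is_Clim_seq (fun N => boxsum k N (expsum_term alpha beta gamma h)) (expsum k alpha beta gamma h).
Proof.
  apply expsum_cvg_of_le. intros m. pose proof (Cmod_ge_0 (beta m)). pose proof (Cmod_ge_0 (gamma m)).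
  rewrite <- (Rmult_1_r (Cmod (gamma m))) at 1. apply Rmult_le_compat_l; nra.
Qed.

Lemma expsum_deriv_cvg (h : C) : Cmod h <= delta ->
  is_Clim_seq (fun N => boxsum k N (expsum_term alpha beta (fun m => gamma m * beta m)%C h))
    (expsum k alpha beta (fun m => gamma m * beta m)%C h).
Proof.
  apply expsum_cvg_of_le. intros m. pose proof (Cmod_ge_0 (beta m)). pose proof (Cmod_ge_0 (gamma m)).
  rewrite Cmod_mult. apply Rmult_le_compat_l; nra.
Qed.

(* termwise, the remainder is [gamma e^(alpha + beta h0) (e^(beta h) - 1 - beta h)] *)
Lemma Cmod_expsum_term_remainder (h0 h : C) (m : nat -> Z) : Cmod h0 + Cmod h <= delta ->
  Cmod (expsum_term alpha beta gamma (h0 + h) m - expsum_term alpha beta gamma h0 m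
        - h * expsum_term alpha beta (fun m => gamma m * beta m) h0 m)%C <= 2 * Cmod h ^ 2 * M m.
Proof.
  intros Hh. pose proof (Cmod_ge_0 h0). pose proof (Cmod_ge_0 h). unfold expsum_term.
  replace (gamma m * cexp (alpha m + beta m * (h0 + h)) - gamma m * cexp (alpha m + beta m * h0)
           - h * (gamma m * beta m * cexp (alpha m + beta m * h0)))%C
    with (gamma m * cexp (alpha m + beta m * h0) * (cexp (beta m * h) - 1 - beta m * h))%C
    by (replace (alpha m + beta m * (h0 + h))%C with (alpha m + beta m * h0 + beta m * h)%C by ring;
        rewrite (cexp_plus (alpha m + beta m * h0)); ring).
  rewrite !Cmod_mult, Cmod_cexp. eapply Rle_trans.
  { apply Rmult_le_compat_l; [apply Rmult_le_pos; [apply Cmod_ge_0 | left; apply exp_pos]|].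
    apply cexp_taylor. }
  rewrite Cmod_mult.
  apply Rle_trans with (2 * Cmod h ^ 2 * (Cmod (gamma m) * (1 + Cmod (beta m)) ^ 2
                                          * exp (Re (alpha m) + Cmod (beta m) * delta))).
  2: { apply Rmult_le_compat_l; [pose proof (pow2_ge_0 (Cmod h)); lra | apply HM]. }
  change (Re (alpha m + beta m * h0)) with (Re (alpha m) + Re (beta m * h0)).
  pose proof (Cmod_ge_0 (beta m)). pose proof (Cmod_ge_0 (gamma m)).
  pose proof (Re_mult_le (beta m) h0). pose proof (pow2_ge_0 (Cmod h)).
  assert (Hexp : exp (Re (alpha m) + Re (beta m * h0)) * exp (Cmod (beta m) * Cmod h)
                 <= exp (Re (alpha m) + Cmod (beta m) * delta)).
  { rewrite <- exp_plus. apply exp_le. nra. }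
  pose proof (exp_pos (Re (alpha m) + Re (beta m * h0))). pose proof (exp_pos (Cmod (beta m) * Cmod h)).
  replace (Cmod (gamma m) * exp (Re (alpha m) + Re (beta m * h0))
           * (2 * (Cmod (beta m) * Cmod h) ^ 2 * exp (Cmod (beta m) * Cmod h)))
    with (2 * Cmod h ^ 2 * (Cmod (gamma m) * Cmod (beta m) ^ 2
           * (exp (Re (alpha m) + Re (beta m * h0)) * exp (Cmod (beta m) * Cmod h)))) by ring.
  apply Rmult_le_compat_l; [lra|]. apply Rmult_le_compat; nra.
Qed.

Lemma expsum_remainder (h0 h : C) : Cmod h0 + Cmod h <= delta ->
  Cmod (expsum k alpha beta gamma (h0 + h) - expsum k alpha beta gamma h0
        - h * expsum k alpha beta (fun m => gamma m * beta m) h0)%C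
    <= 4 * B * Cmod h ^ 2.
Proof.
  intros Hh. pose proof (Cmod_ge_0 h0). pose proof (Cmod_ge_0 h).
  set (rem := fun m => (expsum_term alpha beta gamma (h0 + h) m - expsum_term alpha beta gamma h0 m
                         - h * expsum_term alpha beta (fun m => gamma m * beta m) h0 m)%C).
  destruct (boxsum_cvg_dominated k rem (fun m => 2 * Cmod h ^ 2 * M m) (2 * Cmod h ^ 2 * B))
    as [l [Hl Hlb]].
  { intros m. apply Cmod_expsum_term_remainder, Hh. }
  { intros N. rewrite boxsumR_scal.
    apply Rmult_le_compat_l; [pose proof (pow2_ge_0 (Cmod h)); lra | apply HB]. }
  assert (Hl' : is_Clim_seq (fun N => boxsum k N rem)
                  (expsum k alpha beta gamma (h0 + h) - expsum k alpha beta gamma h0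
                   - h * expsum k alpha beta (fun m => gamma m * beta m) h0)%C).
  { apply (is_Clim_seq_ext
             (fun N => boxsum k N (expsum_term alpha beta gamma (h0 + h))
                       - boxsum k N (expsum_term alpha beta gamma h0)
                       - h * boxsum k N (expsum_term alpha beta (fun m => gamma m * beta m) h0))%C).
    - intros N. unfold rem. rewrite !boxsum_minus, boxsum_scal. reflexivity.
    - apply is_Clim_seq_minus; [apply is_Clim_seq_minus|apply is_Clim_seq_scal].
      + apply expsum_cvg. eapply Rle_trans; [apply Cmod_triangle | lra].
      + apply expsum_cvg. lra.
      + apply expsum_deriv_cvg. lra. }
  rewrite <- (is_Clim_seq_unique _ _ Hl'), (is_Clim_seq_unique _ _ Hl). lra.
Qed.

Lemma expsum_is_derive (h0 : C) : Cmod h0 < delta ->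
  @is_derive C_AbsRing C_NormedModule (expsum k alpha beta gamma) h0
    (expsum k alpha beta (fun m => gamma m * beta m)%C h0).
Proof.
  intros Hh0. apply (is_derive_quadratic_remainder _ _ _ (delta - Cmod h0) (4 * B)); [lra| |].
  - pose proof expsum_bound_nonneg. lra.
  - intros h Hh. apply expsum_remainder. change (abs h) with (Cmod h) in Hh. lra.
Qed.

End ExpSum.

Lemma expsum_ext (k : nat) (alpha beta gamma gamma' : (nat -> Z) -> C) (h : C) :
  (forall m, gamma m = gamma' m) -> expsum k alpha beta gamma h = expsum k alpha beta gamma' h.
Proof.
  intros H. unfold expsum, expsum_term. do 2 f_equal. apply functional_extensionality. intros N.
  f_equal. apply functional_extensionality. intros m. rewrite H. reflexivity.
Qed.

(** * The theta series *)

Section Theta.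
Variables (n : nat) (Qb : nat -> nat -> R).

Definition theta_exponent (z : C) (w : nat -> C) (m : nat -> Z) : C :=
  let q := lattice_pt n Qb m in
  ((RtoC (PI * sqnorm n q) * z + RtoC (2 * PI) * qdot n q w) * Ci)%C.

(* [theta_exponent] is affine in [z], with slope [theta_beta_u],
   and in [w i], with slope [theta_beta_w i] *)
Definition theta_beta_u (m : nat -> Z) : C := (RtoC (PI * sqnorm n (lattice_pt n Qb m)) * Ci)%C.

Definition theta_beta_w (i : nat) (m : nat -> Z) : C := (RtoC (2 * PI * lattice_pt n Qb m i) * Ci)%C.

Lemma ThetaL_expsum (z : C) (w : nat -> C) (alpha beta : (nat -> Z) -> C) (h : C) :
  (forall m, theta_exponent z w m = alpha m + beta m * h)%C ->
  ThetaL n Qb z w = expsum n alpha beta (fun _ => RtoC 1) h.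
Proof.
  intros H. unfold ThetaL, expsum, expsum_term. do 2 f_equal. apply functional_extensionality. intros N.
  f_equal. apply functional_extensionality. intros m.
  transitivity (cexp (theta_exponent z w m)); [apply exp_star_cexp | rewrite H; ring].
Qed.

Lemma theta_exponent_shift_u (u v h : R) (w : nat -> C) (m : nat -> Z) :
  theta_exponent (u + h, v) w m = (theta_exponent (u, v) w m + theta_beta_u m * RtoC h)%C.
Proof.
  unfold theta_exponent, theta_beta_u.
  replace (u + h, v) with ((u, v) + RtoC h)%C by (unfold Cplus, RtoC; simpl; f_equal; ring).
  ring.
Qed.

Lemma sum_n_indicator (c : C) (i N : nat) :
  sum_n (fun j => if Nat.eqb j i then c else RtoC 0) N = if Nat.leb i N then c else RtoC 0.
Proof.
  induction N as [|N IH].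
  - rewrite sum_O. destruct i; reflexivity.
  - rewrite sum_Sn, IH. change (plus ?x ?y) with (Cplus x y).
    destruct (Nat.eqb_spec (S N) i) as [<-|Hne].
    + rewrite (proj2 (Nat.leb_gt (S N) N)), Nat.leb_refl by lia. apply Cplus_0_l.
    + rewrite Cplus_0_r.
      destruct (Nat.leb_spec i N), (Nat.leb_spec i (S N)); solve [reflexivity | lia].
Qed.

Lemma qdot_upd (q : nat -> R) (w : nat -> C) (i : nat) (t : C) : (i <= n)%nat ->
  qdot n q (upd w i t) = (qdot n q (upd w i 0) + RtoC (q i) * t)%C.
Proof.
  intros Hi. unfold qdot.
  rewrite (sum_n_ext _ (fun j => RtoC (q j) * upd w i 0 j + (if Nat.eqb j i then RtoC (q i) * t else 0))%C).
  - rewrite sum_n_Cplus, sum_n_indicator, (proj2 (Nat.leb_le i n) Hi). reflexivity.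
  - intros j. match goal with |- ?a = ?b => change (@eq C a b) end.
    unfold upd. destruct (Nat.eqb_spec j i) as [->|]; ring.
Qed.

Lemma theta_exponent_upd (z : C) (w : nat -> C) (i : nat) (t : C) (m : nat -> Z) : (i <= n)%nat ->
  theta_exponent z (upd w i t) m = (theta_exponent z (upd w i 0) m + theta_beta_w i m * t)%C.
Proof.
  intros Hi. unfold theta_exponent, theta_beta_w. rewrite qdot_upd by exact Hi.
  replace (RtoC (2 * PI * lattice_pt n Qb m i)) with (RtoC (2 * PI) * RtoC (lattice_pt n Qb m i))%C
    by (unfold Cmult, RtoC; simpl; f_equal; ring).
  ring.
Qed.

Lemma Cmod_RtoC_Ci (r : R) : Cmod (RtoC r * Ci)%C = Rabs r.
Proof. rewrite Cmod_mult, Cmod_Ci, Cmod_R. ring. Qed.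

Lemma Re_theta_exponent_le (u v : R) (w : nat -> C) (m : nat -> Z) : 0 <= v ->
  let q := lattice_pt n Qb m in
  Re (theta_exponent (u, v) w m)
    <= - PI * v * sqnorm n q + 2 * PI * l1norm n (fun j => Im (w j)) * l1norm n q.
Proof.
  intros Hv q. unfold theta_exponent. fold q.
  assert (E : Re ((RtoC (PI * sqnorm n q) * (u, v) + RtoC (2 * PI) * qdot n q w) * Ci)%C
              = - PI * v * sqnorm n q - 2 * PI * sum_n (fun j => q j * Im (w j)) n).
  { transitivity (- (PI * sqnorm n q * v) - 2 * PI * Im (qdot n q w)).
    - unfold Cmult, Cplus, RtoC, Ci, Re, Im; simpl. ring.
    - unfold qdot. rewrite sum_n_Im. rewrite (sum_n_ext _ (fun j => q j * Im (w j))); [ring|].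
      intros j. unfold Cmult, RtoC, Im; simpl. ring. }
  rewrite E.
  assert (H : - sum_n (fun j => q j * Im (w j)) n <= l1norm n (fun j => Im (w j)) * l1norm n q).
  { eapply Rle_trans; [apply Rle_abs|]. rewrite Rabs_Ropp. unfold l1norm at 2.
    rewrite <- sum_n_Rmult_l. apply sum_n_Rabs_le. intros j Hj.
    rewrite Rabs_mult, Rmult_comm. apply Rmult_le_compat_r; [apply Rabs_pos|].
    apply (Rabs_le_l1norm n (fun j => Im (w j))), Hj. }
  pose proof PI_RGT_0. nra.
Qed.

Lemma upd_id (w : nat -> C) (i : nat) : upd w i (w i) = w.
Proof.
  apply functional_extensionality. intros j. unfold upd. destruct (Nat.eqb_spec j i) as [->|]; reflexivity.
Qed.

Lemma ThetaL_shift_u (u v h : R) (w : nat -> C) :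
  ThetaL n Qb (u + h, v) w
    = expsum n (theta_exponent (u, v) w) theta_beta_u (fun _ => RtoC 1) (RtoC h).
Proof. apply ThetaL_expsum. intros m. apply theta_exponent_shift_u. Qed.

Lemma ThetaL_upd (z : C) (w : nat -> C) (i : nat) (t : C) : (i <= n)%nat ->
  ThetaL n Qb z (upd w i t)
    = expsum n (theta_exponent z (upd w i 0)) (theta_beta_w i) (fun _ => RtoC 1) t.
Proof. intros Hi. apply ThetaL_expsum. intros m. apply theta_exponent_upd, Hi. Qed.

(* [d_u Theta_L], differentiated termwise *)
Definition ThetaL_du (u v : R) (w : nat -> C) : C :=
  expsum n (theta_exponent (u, v) w) theta_beta_u theta_beta_u (RtoC 0).

Lemma theta_beta_w_sum_sqr (m : nat -> Z) :
  sum_n (fun i => theta_beta_w i m * theta_beta_w i m)%C n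
    = (RtoC (4 * PI) * (Ci * theta_beta_u m))%C.
Proof.
  set (q := lattice_pt n Qb m).
  rewrite (sum_n_ext _ (fun i => RtoC (- (4 * PI ^ 2) * (q i * q i)))).
  - rewrite sum_n_RtoC, sum_n_Rmult_l. unfold theta_beta_u, sqnorm. fold q.
    unfold Cmult, RtoC, Ci; simpl. f_equal; ring.
  - intros i. match goal with |- ?a = ?b => change (@eq C a b) end.
    unfold theta_beta_w. fold q. unfold Cmult, RtoC, Ci; simpl. f_equal; ring.
Qed.

Section FullRankLattice.
Hypothesis hL : lin_indep n Qb.

Lemma theta_dominated_u (u v : R) (w : nat -> C) : 0 < v ->
  exists M B, (forall N, boxsumR n N M <= B) /\ forall m,
    Cmod (RtoC 1) * (1 + Cmod (theta_beta_u m)) ^ 2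
      * exp (Re (theta_exponent (u, v) w m) + Cmod (theta_beta_u m) * (v / 2)) <= M m.
Proof.
  intros Hv. pose proof PI_RGT_0. pose proof PI_4.
  pose proof (l1norm_nonneg n (fun j => Im (w j))).
  destruct (lattice_gaussian_dominated n Qb (PI * v / 2) (2 * PI * l1norm n (fun j => Im (w j))) 16)
    as [M [B [HB HM]]]; [exact hL | nra | nra | lra |].
  exists M, B. split; [exact HB|]. intros m. eapply Rle_trans; [|apply HM].
  pose proof (Re_theta_exponent_le u v w m ltac:(lra)) as Hre. cbv zeta in Hre |- *.
  unfold theta_beta_u. rewrite Cmod_1, Cmod_RtoC_Ci.
  set (q := lattice_pt n Qb m) in *. pose proof (sqnorm_nonneg n q). pose proof (l1norm_nonneg n q).
  rewrite Rabs_pos_eq by nra. set (s := sqnorm n q) in *.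
  apply Rmult_exp_le_compat; [split|].
  - nra.
  - assert (1 + PI * s <= 4 * (1 + s)) by nra.
    assert ((1 + PI * s) ^ 2 <= (4 * (1 + s)) ^ 2) by (apply pow_incr; nra).
    assert (1 + s <= (1 + s) ^ 3) by nra. nra.
  - nra.
Qed.

Lemma Cmod_theta_beta_w (i : nat) (m : nat -> Z) :
  Cmod (theta_beta_w i m) = 2 * PI * Rabs (lattice_pt n Qb m i).
Proof.
  unfold theta_beta_w. rewrite Cmod_RtoC_Ci, !Rabs_mult, (Rabs_pos_eq 2), (Rabs_pos_eq PI);
    [reflexivity | pose proof PI_RGT_0; lra | lra].
Qed.

Lemma Cmod_theta_beta_w_le (i : nat) (m : nat -> Z) : (i <= n)%nat ->
  Cmod (theta_beta_w i m) <= 8 * (1 + sqnorm n (lattice_pt n Qb m)).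
Proof.
  intros Hi. rewrite Cmod_theta_beta_w. pose proof PI_RGT_0. pose proof PI_4.
  pose proof (Rabs_le_1_plus_sqnorm n (lattice_pt n Qb m) i Hi). pose proof (Rabs_pos (lattice_pt n Qb m i)).
  nra.
Qed.

Lemma theta_dominated_w (u v delta : R) (w : nat -> C) (i : nat) (gamma : (nat -> Z) -> C) :
  0 < v -> 0 <= delta -> (i <= n)%nat ->
  (forall m, Cmod (gamma m) <= 8 * (1 + sqnorm n (lattice_pt n Qb m))) ->
  exists M B, (forall N, boxsumR n N M <= B) /\ forall m,
    Cmod (gamma m) * (1 + Cmod (theta_beta_w i m)) ^ 2
      * exp (Re (theta_exponent (u, v) w m) + Cmod (theta_beta_w i m) * delta) <= M m.
Proof.
  intros Hv Hd Hi Hg. pose proof PI_RGT_0. pose proof PI_4.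
  pose proof (l1norm_nonneg n (fun j => Im (w j))).
  destruct (lattice_gaussian_dominated n Qb (PI * v) (2 * PI * (l1norm n (fun j => Im (w j)) + delta)) 648)
    as [M [B [HB HM]]]; [exact hL | nra | nra | lra |].
  exists M, B. split; [exact HB|]. intros m. eapply Rle_trans; [|apply HM].
  pose proof (Re_theta_exponent_le u v w m ltac:(lra)) as Hre. cbv zeta in Hre |- *.
  pose proof (Cmod_theta_beta_w_le i m Hi) as Hb8. pose proof (Hg m) as Hgm.
  rewrite Cmod_theta_beta_w in *.
  set (q := lattice_pt n Qb m) in *. pose proof (sqnorm_nonneg n q). pose proof (l1norm_nonneg n q).
  pose proof (Rabs_le_l1norm n q i Hi). pose proof (Rabs_pos (q i)). pose proof (Cmod_ge_0 (gamma m)).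
  set (s := sqnorm n q) in *. set (b := 2 * PI * Rabs (q i)) in *.
  assert (Hb0 : 0 <= b) by (unfold b; nra).
  apply Rmult_exp_le_compat; [split|].
  - nra.
  - assert (Hsq : (1 + b) ^ 2 <= (9 * (1 + s)) ^ 2) by (apply pow_incr; lra).
    assert (Hsq0 : 0 <= (1 + b) ^ 2) by apply pow2_ge_0.
    replace (648 * (1 + s) ^ 3) with (8 * (1 + s) * (9 * (1 + s)) ^ 2) by ring.
    apply Rmult_le_compat; lra.
  - assert (b * delta <= 2 * PI * l1norm n q * delta)
      by (apply Rmult_le_compat_r; [lra | unfold b; nra]).
    nra.
Qed.

Lemma ThetaL_u_remainder (u v : R) (w : nat -> C) : 0 < v ->
  exists c, 0 <= c /\ forall h, Rabs h <= v / 2 ->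
    Cmod (ThetaL n Qb ((u + h)%R, v) w - ThetaL n Qb (u, v) w - RtoC h * ThetaL_du u v w)%C
      <= c * h ^ 2.
Proof.
  intros Hv. destruct (theta_dominated_u u v w Hv) as [M [B [HB HM]]].
  exists (4 * B). split; [pose proof (expsum_bound_nonneg _ _ _ _ _ _ _ HM HB); lra|].
  intros h Hh.
  assert (Hrem := expsum_remainder _ _ _ _ _ _ _ HM HB (RtoC 0) (RtoC h)).
  rewrite Cmod_0, Cmod_R, Cplus_0_l, pow2_abs in Hrem.
  replace (ThetaL n Qb (u, v) w) with (ThetaL n Qb (u + 0, v) w) by (rewrite Rplus_0_r; reflexivity).
  rewrite !ThetaL_shift_u. unfold ThetaL_du.
  rewrite (expsum_ext n _ _ theta_beta_u (fun m => RtoC 1 * theta_beta_u m)%C) by (intros m; ring).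
  apply Hrem. lra.
Qed.

Lemma is_derive_ThetaL_upd (u v : R) (w : nat -> C) (i : nat) (t : C) : 0 < v -> (i <= n)%nat ->
  @is_derive C_AbsRing C_NormedModule (fun t' => ThetaL n Qb (u, v) (upd w i t')) t
    (expsum n (theta_exponent (u, v) (upd w i 0)) (theta_beta_w i) (theta_beta_w i) t).
Proof.
  intros Hv Hi. pose proof (Cmod_ge_0 t).
  destruct (theta_dominated_w u v (Cmod t + 1) (upd w i 0) i (fun _ => RtoC 1) Hv)
    as [M [B [HB HM]]]; [lra | exact Hi | |].
  { intros m. rewrite Cmod_1. pose proof (sqnorm_nonneg n (lattice_pt n Qb m)). lra. }
  apply (is_derive_ext (expsum n (theta_exponent (u, v) (upd w i 0)) (theta_beta_w i) (fun _ => RtoC 1))).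
  { intros t'. symmetry. apply ThetaL_upd, Hi. }
  rewrite (expsum_ext n _ _ (theta_beta_w i) (fun m => RtoC 1 * theta_beta_w i m)%C) by (intros m; ring).
  apply (expsum_is_derive _ _ _ _ _ _ _ HM HB). lra.
Qed.

Lemma is_derive_expsum_theta_w (u v : R) (w : nat -> C) (i : nat) (t : C) : 0 < v -> (i <= n)%nat ->
  @is_derive C_AbsRing C_NormedModule
    (expsum n (theta_exponent (u, v) w) (theta_beta_w i) (theta_beta_w i)) t
    (expsum n (theta_exponent (u, v) w) (theta_beta_w i) (fun m => theta_beta_w i m * theta_beta_w i m)%C t).
Proof.
  intros Hv Hi. pose proof (Cmod_ge_0 t).
  destruct (theta_dominated_w u v (Cmod t + 1) w i (theta_beta_w i) Hv)
    as [M [B [HB HM]]]; [lra | exact Hi | intros m; apply Cmod_theta_beta_w_le, Hi |].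
  apply (expsum_is_derive _ _ _ _ _ _ _ HM HB). lra.
Qed.

Lemma is_Clim_seq_ThetaL_du (u v : R) (w : nat -> C) : 0 < v ->
  is_Clim_seq (fun N => boxsum n N (fun m => theta_beta_u m * cexp (theta_exponent (u, v) w m))%C)
    (ThetaL_du u v w).
Proof.
  intros Hv. destruct (theta_dominated_u u v w Hv) as [M [B [HB HM]]].
  unfold ThetaL_du.
  rewrite (expsum_ext n _ _ theta_beta_u (fun m => RtoC 1 * theta_beta_u m)%C) by (intros m; ring).
  eapply is_Clim_seq_ext; [|apply (expsum_deriv_cvg _ _ _ _ _ _ _ HM HB); rewrite Cmod_0; lra].
  intros N. cbv beta. f_equal. apply functional_extensionality. intros m. unfold expsum_term.
  replace (theta_exponent (u, v) w m + theta_beta_u m * RtoC 0)%C with (theta_exponent (u, v) w m) by ring.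
  ring.
Qed.

Lemma is_Clim_seq_ThetaL_dww (u v : R) (w : nat -> C) (i : nat) : 0 < v -> (i <= n)%nat ->
  is_Clim_seq
    (fun N => boxsum n N (fun m => theta_beta_w i m * theta_beta_w i m * cexp (theta_exponent (u, v) w m))%C)
    (expsum n (theta_exponent (u, v) (upd w i 0)) (theta_beta_w i)
       (fun m => theta_beta_w i m * theta_beta_w i m)%C (w i)).
Proof.
  intros Hv Hi. pose proof (Cmod_ge_0 (w i)).
  destruct (theta_dominated_w u v (Cmod (w i)) (upd w i 0) i (theta_beta_w i) Hv)
    as [M [B [HB HM]]]; [lra | exact Hi | intros m; apply Cmod_theta_beta_w_le, Hi |].
  eapply is_Clim_seq_ext; [|apply (expsum_deriv_cvg _ _ _ _ _ _ _ HM HB); lra].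
  intros N. cbv beta. f_equal. apply functional_extensionality. intros m. unfold expsum_term.
  rewrite <- theta_exponent_upd, upd_id by exact Hi. reflexivity.
Qed.

(* termwise, [Sum_i (2 pi i q_i)^2 = -4 pi^2 |q|^2 = 4 pi i (i pi |q|^2)] *)
Lemma ThetaL_heat_equation (u v : R) (w : nat -> C) : 0 < v ->
  sum_n (fun i => expsum n (theta_exponent (u, v) (upd w i 0)) (theta_beta_w i)
                    (fun m => theta_beta_w i m * theta_beta_w i m)%C (w i)) n
    = (RtoC (4 * PI) * (Ci * ThetaL_du u v w))%C.
Proof.
  intros Hv.
  assert (Hsum := is_Clim_seq_sum_n _ _ n (fun i Hi => is_Clim_seq_ThetaL_dww u v w i Hv Hi)).
  rewrite <- (is_Clim_seq_unique _ _ Hsum). apply is_Clim_seq_unique.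
  eapply is_Clim_seq_ext; [|apply is_Clim_seq_scal, is_Clim_seq_scal, is_Clim_seq_ThetaL_du, Hv].
  intros N. cbv beta. rewrite <- !boxsum_scal, boxsum_sum_n.
  f_equal. apply functional_extensionality. intros m.
  rewrite sum_n_Cmult_r, theta_beta_w_sum_sqr. ring.
Qed.

End FullRankLattice.

End Theta.

Theorem mainTheorem8 (n : nat) (Qb : nat -> nat -> R)
  (hn : (1 <= n)%nat)
  (hL : lin_indep n Qb)
  (hint : forall m : nat -> Z, exists k : nat, sqnorm n (lattice_pt n Qb m) = INR k) :
  forall (u v : R) (w : nat -> C), 0 < v ->
  exists (a b : R) (d2 : nat -> C),
    (* slice derivative  d_s Theta = d_u alpha + omega d_u beta = (a, b) *)
    is_derive (fun u' => Re (ThetaL n Qb (u', v) w)) u a /\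
    is_derive (fun u' => Im (ThetaL n Qb (u', v) w)) u b /\
    (* d2 i = d^2 Theta / d w_i^2  (complex derivatives in w_i) *)
    (forall i, (i <= n)%nat ->
       exists g : C -> C,
         (forall t : C, @is_derive C_AbsRing C_NormedModule
                          (fun t' => ThetaL n Qb (u, v) (upd w i t')) t (g t)) /\
         @is_derive C_AbsRing C_NormedModule g (w i) (d2 i)) /\
    (* [Delta_w - 4 pi omega d_s] Theta = 0 *)
    Cminus (sum_n d2 n) (Cmult (RtoC (4 * PI)) (Cmult Ci (a, b))) = RtoC 0.
Proof.
  intros u v w hv.
  set (du := ThetaL_du n Qb u v w).
  set (alpha := fun i => theta_exponent n Qb (u, v) (upd w i 0)).
  destruct (ThetaL_u_remainder n Qb hL u v w hv) as [c [Hc Hrem]].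
  destruct (is_derive_Re_Im_of_remainder (fun y => ThetaL n Qb (y, v) w) u du (v / 2) c)
    as [Hre Him]; [lra | exact Hc | exact Hrem |].
  exists (Re du), (Im du),
    (fun i => expsum n (alpha i) (theta_beta_w n Qb i)
                (fun m => theta_beta_w n Qb i m * theta_beta_w n Qb i m)%C (w i)).
  split; [exact Hre|]. split; [exact Him|]. split.
  - intros i Hi. exists (expsum n (alpha i) (theta_beta_w n Qb i) (theta_beta_w n Qb i)). split.
    + intros t. apply is_derive_ThetaL_upd; assumption.
    + apply is_derive_expsum_theta_w; assumption.
  - unfold alpha. rewrite ThetaL_heat_equation by assumption. fold du.
    replace (Re du, Im du) with du by (destruct du; reflexivity). ring.
Qed.
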